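(* For $n\ge 0$ let $s_n=\sum_{r=0}^{n} 1/r!$ and define the integer $A_n$ by $A_n/n! = s_n$, i.e. $A_n=\sum_{r=0}^n n!/r!$. Let $d_n=\gcd(A_n,n!)$. Then for every $n\ge 0$, $$d_n\, d_{n+1}\, d_{n+2} \le (n+3)!.$$ *)

From mathcomp Require Import all_boot.
Set Implicit Arguments. Unset Strict Implicit. Unset Printing Implicit Defensive.

(* A_n = sum_{r=0}^n n!/r!  (each division is exact since r <= n),
   so that A_n / n! = s_n = sum_{r=0}^n 1/r!. *)
Definition A (n : nat) : nat := \sum_(r < n.+1) n`! %/ r`!.

Definition d (n : nat) : nat := gcdn (A n) n`!.

(* Since A_(n+1) = (n+1) A_n + 1, consecutive A's are coprime, so d_(n+1) is
   coprime to both d_n and d_(n+2). Iterating, A_(n+2) = (n+2)(n+1) A_n + (n+3),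
   so gcd(d_n, d_(n+2)) divides n+3. All three d's divide (n+2)!, hence so does
   d_(n+1) lcm(d_n, d_(n+2)), and the product d_n d_(n+1) d_(n+2) is this lcm
   term times gcd(d_n, d_(n+2)), which divides (n+2)! (n+3) = (n+3)!. *)
From mathcomp Require Import all_boot.

Set Implicit Arguments.
Unset Strict Implicit.
Unset Printing Implicit Defensive.

Lemma dvdn_fact_fact m n : m <= n -> m`! %| n`!.
Proof. by move=> le_mn; rewrite -(ffact_fact (leq_subr m n)) subKn // dvdn_mull. Qed.

Lemma dvdn_mul3_coprime_mid a b c N k :
  coprime a b -> coprime b c -> a %| N -> b %| N -> c %| N -> gcdn a c %| k ->
  a * b * c %| N * k.
Proof.
move=> co_ab co_bc aN bN cN gac_k.
have co_b_lcm : coprime b (lcmn a c).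
  apply: coprime_dvdr (_ : lcmn a c %| a * c) _.
    by rewrite -muln_lcm_gcd dvdn_mulr.
  by rewrite coprimeMr [coprime b a]coprime_sym co_ab co_bc.
have lcm_bac : b * lcmn a c %| N.
  by rewrite Gauss_dvd // bN dvdn_lcm aN cN.
have -> : a * b * c = b * lcmn a c * gcdn a c.
  by rewrite -[RHS]mulnA muln_lcm_gcd mulnCA mulnA.
exact: dvdn_mul.
Qed.

Lemma A_rec n : A n.+1 = n.+1 * A n + 1.
Proof.
rewrite /A big_ord_recr /= divnn fact_gt0; congr (_ + _).
rewrite big_distrr /=; apply: eq_bigr => i _.
by rewrite factS muln_divA // dvdn_fact_fact // -ltnS.
Qed.

Lemma A_rec2 n : A n.+2 = n.+2 * n.+1 * A n + n.+3.
Proof. by rewrite !A_rec mulnDr muln1 mulnA -addnA addn1. Qed.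

Lemma coprime_A_succ n : coprime (A n) (A n.+1).
Proof. by rewrite /coprime A_rec gcdnMDl gcdn1. Qed.

Lemma gcd_A_A2_dvd n : gcdn (A n) (A n.+2) %| n.+3.
Proof. by rewrite A_rec2 gcdnMDl dvdn_gcdr. Qed.

Lemma d_dvd_A n : d n %| A n.
Proof. exact: dvdn_gcdl. Qed.

Lemma d_dvd_fact m n : m <= n -> d m %| n`!.
Proof. by move=> le_mn; rewrite (dvdn_trans (dvdn_gcdr _ _)) ?dvdn_fact_fact. Qed.

Lemma coprime_d_succ n : coprime (d n) (d n.+1).
Proof. exact: coprime_dvdl (d_dvd_A n) (coprime_dvdr (d_dvd_A n.+1) (coprime_A_succ n)). Qed.

Lemma gcd_d_d2_dvd n : gcdn (d n) (d n.+2) %| n.+3.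
Proof.
apply: dvdn_trans _ (gcd_A_A2_dvd n).
by rewrite dvdn_gcd (dvdn_trans (dvdn_gcdl _ _) (d_dvd_A _))
  (dvdn_trans (dvdn_gcdr _ _) (d_dvd_A _)).
Qed.

Theorem lemma2p2 (n : nat) : d n * d n.+1 * d n.+2 <= n.+3`!.
Proof.
apply: dvdn_leq; first exact: fact_gt0.
rewrite factS [n.+3 * _]mulnC.
by apply: (dvdn_mul3_coprime_mid (coprime_d_succ n) (coprime_d_succ n.+1)
  _ _ _ (gcd_d_d2_dvd n)); apply: d_dvd_fact; rewrite // !leqW.
Qed.
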